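(* Let $G$ be a finitely generated non-abelian free group and let $X$ be a finite generating set of $G$. Then no positive cone of $G$ is a coarsely connected subset of the Cayley graph $\Gamma(G,X)$.
   Context: A positive cone of a group $G$ is a subsemigroup $P\subseteq G$ with $G=P\sqcup P^{-1}\sqcup\{1\}$. $G$ is given the word metric $d_X$ of $\Gamma(G,X)$. For $r\geq1$, an $r$-path is a finite sequence $g_0,\dots,g_n$ in $G$ with $d_X(g_i,g_{i+1})\le r$ for all $i$. A subset $S\subseteq G$ is coarsely connected if there exists $r\geq 1$ such that any two elements of $S$ are joined by an $r$-path all of whose terms lie in $S$ (equivalently, some $r$-neighbourhood of $S$ spans a connected subgraph). *)

From mathcomp Require Import all_boot.
Set Implicit Arguments. Unset Strict Implicit. Unset Printing Implicit Defensive.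

(* Letters: generator index and sign (true = a_i, false = a_i^-1). *)
Definition letter (n : nat) := ('I_n * bool)%type.
Definition linv n (x : letter n) : letter n := (x.1, ~~ x.2).

Definition reduced n (w : seq (letter n)) : bool :=
  sorted (fun a b => b != linv a) w.

Definition push n (x : letter n) (s : seq (letter n)) : seq (letter n) :=
  match s with
  | y :: s' => if y == linv x then s' else x :: s
  | [::] => [:: x]
  end.

Definition red n (w : seq (letter n)) : seq (letter n) := foldr (@push n) [::] w.

Lemma push_reduced n (x : letter n) s : reduced s -> reduced (push x s).
Proof.
case: s => [|y s] //= Hs.
case: ifP => Hy.
- exact: (path_sorted Hs).
- by rewrite /reduced /= Hy Hs.
Qed.

Lemma red_reduced n (w : seq (letter n)) : reduced (red w).
Proof. by elim: w => [|x w IH] //=; apply: push_reduced. Qed.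

Definition FG (n : nat) := {w : seq (letter n) | reduced w}.

Definition fg_one n : FG n := exist _ [::] isT.
Definition fg_mul n (u v : FG n) : FG n :=
  exist _ (red (proj1_sig u ++ proj1_sig v)) (red_reduced _).
Definition fg_inv n (u : FG n) : FG n :=
  exist _ (red (rev (map (@linv n) (proj1_sig u)))) (red_reduced _).

Definition fg_prod n (s : seq (FG n)) : FG n := foldr (@fg_mul n) (fg_one n) s.

Definition in_symm n (X : seq (FG n)) (x : FG n) : Prop :=
  (x \in X) \/ (fg_inv x \in X).

Definition generates n (X : seq (FG n)) : Prop :=
  forall g : FG n, exists s : seq (FG n),
    (forall x, x \in s -> in_symm X x) /\ fg_prod s = g.

(* d_X(g,h) <= r for the word metric of the Cayley graph Gamma(F_n, X):
   g^{-1} h is a product of at most r elements of X^{+-1}. *)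
Definition dist_le n (X : seq (FG n)) (r : nat) (g h : FG n) : Prop :=
  exists s : seq (FG n), size s <= r /\
    (forall x, x \in s -> in_symm X x) /\ fg_mul g (fg_prod s) = h.

Definition positive_cone n (P : FG n -> Prop) : Prop :=
  (forall g h, P g -> P h -> P (fg_mul g h)) /\
  (forall g : FG n,
     let A := P g in let B := P (fg_inv g) in let C := g = fg_one n in
     (A \/ B \/ C) /\ ~ (A /\ B) /\ ~ (A /\ C) /\ ~ (B /\ C)).

Definition rpath_in n (X : seq (FG n)) (r : nat) (S : FG n -> Prop) (a b : FG n) : Prop :=
  exists (k : nat) (f : nat -> FG n),
    f 0 = a /\ f k = b /\ (forall i, i <= k -> S (f i)) /\
    (forall i, i < k -> dist_le X r (f i) (f i.+1)).

Definition coarsely_connected n (X : seq (FG n)) (S : FG n -> Prop) : Prop :=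
  exists r : nat, 1 <= r /\ forall a b, S a -> S b -> rpath_in X r S a b.

(* Suppose the positive cone P is r-coarsely connected and let K bound the
   length, in the free basis, of the elements t such that d_X(g, g t) <= r.
   Since g < h <-> P (g^-1 h) is a left-invariant total order, some E exceeds
   the finite ball of radius K + 1, so c := E^-1 satisfies c w \notin P for
   every w in that ball; in particular c <> 1.  As the rank is at least 2, P
   contains an element whose reduced word starts with c (one of the conjugates
   c x c^-1, c x^-1 c^-1 of a letter x) and one that does not (a letter).  An
   r-path inside P between them has a step g -> g t, |t| <= K, leaving the
   words with prefix c; reduction shows that then g = c w with |w| < |t|,
   contradicting g \in P. *)

From HB Require Import structures.
From mathcomp Require Import all_boot zify.
Set Implicit Arguments. Unset Strict Implicit. Unset Printing Implicit Defensive.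

Section FreeReduction.
Variable n : nat.
Implicit Types (x y t : letter n) (s u v w : seq (letter n)).

Definition winv w := rev (map (@linv n) w).

Lemma linvK : involutive (@linv n).
Proof. by case=> i b; rewrite /linv /= negbK. Qed.

Lemma winvK : involutive winv.
Proof. by move=> w; rewrite /winv map_rev revK (mapK linvK). Qed.

Lemma winv_reduced w : reduced w -> reduced (winv w).
Proof.
rewrite /reduced /winv rev_sorted sorted_map; apply: sub_sorted => x y /=.
by rewrite linvK eq_sym.
Qed.

Lemma red_id w : reduced w -> red w = w.
Proof.
elim: w => [|x w IHw] //= w_red; rewrite IHw; last exact: path_sorted w_red.
by case: w w_red {IHw} => [|y w] //= /andP[/negbTE ->].
Qed.

Lemma size_red w : size (red w) <= size w.
Proof.
elim: w => [|x w IHw] //=; case: (red w) IHw => [|y s] //= le_s.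
by case: eqP => _ /=; lia.
Qed.

Lemma push_linvK x s : reduced s -> push x (push (linv x) s) = s.
Proof.
case: s => [|y s] /=; first by rewrite eqxx.
case: eqP => [->|_] s_red; last by rewrite /= eqxx.
rewrite linvK in s_red *; by case: s s_red => [|z s] //= /andP[/negbTE ->].
Qed.

Lemma foldr_push_reduced s u : reduced s -> reduced (foldr (@push n) s u).
Proof. by move=> s_red; elim: u => [|x u IHu] //=; apply: push_reduced. Qed.

Lemma foldr_push_red s u : reduced s -> foldr (@push n) s (red u) = foldr (@push n) s u.
Proof.
move=> s_red; elim: u => [|x u IHu] //=; rewrite -IHu.
case: (red u) => [|y r] //=; case: eqP => [->|_] //=.
by rewrite push_linvK // foldr_push_reduced.
Qed.

Lemma red_cat u v : red (u ++ v) = foldr (@push n) (red v) u.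
Proof. by rewrite /red foldr_cat. Qed.

Lemma red_redl u v : red (red u ++ v) = red (u ++ v).
Proof. by rewrite !red_cat foldr_push_red ?red_reduced. Qed.

Lemma red_redr u v : red (u ++ red v) = red (u ++ v).
Proof. by rewrite !red_cat red_id ?red_reduced. Qed.

Lemma red_winv_cat u : red (winv u ++ u) = [::].
Proof.
suff foldr_push_winv s : reduced s -> foldr (@push n) (foldr (@push n) s u) (winv u) = s.
  by rewrite red_cat foldr_push_winv.
move=> s_red; elim: u => [|x u IHu] //=.
rewrite /winv /= rev_cons foldr_rcons -/(winv u).
by rewrite -{2}(linvK x) push_linvK ?foldr_push_reduced.
Qed.

(* As [red (w ++ v) = foldr push (red v) w], this says that reducing [w ++ v]
   cancels a suffix of [w] against a prefix of [red v]. *)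
Lemma foldr_push_cancel s w : reduced w -> exists k,
  [/\ k <= size s, k <= size w & foldr (@push n) s w = take (size w - k) w ++ drop k s].
Proof.
elim: w => [|y w IHw] w_red; first by exists 0; rewrite drop0.
have [k [le_ks le_kw]] := IHw (path_sorted w_red); rewrite /= => ->.
case: (ltnP k (size w)) => [lt_kw | ge_kw].
  exists k; split => //; first exact: ltnW.
  case: w w_red lt_kw {IHw le_kw} => [|z w] //= /andP[z_y _] lt_kw.
  by rewrite (subSn (ltnW lt_kw)) (@subSn k (size w) lt_kw) /= (negbTE z_y).
have {le_kw ge_kw} ek : k = size w by apply/eqP; rewrite eqn_leq le_kw.
subst k; rewrite subnn take0 /=.
case E: (drop (size w) s) => [|z d] /=.
  by exists (size w); split; rewrite // subSnn /= take0 E.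
case: eqP => _; last by exists (size w); split; rewrite // subSnn /= take0 E.
exists (size w).+1; split => //.
- by move: (size_drop (size w) s); rewrite E /=; lia.
- by rewrite subnn take0 -add1n -drop_drop E /= drop0.
Qed.

Lemma prefix_red_cat c w v : reduced w -> prefix c w -> size c + size v <= size w ->
  prefix c (red (w ++ v)).
Proof.
rewrite prefixE red_cat => w_red /eqP c_w le_cvw.
have [k [le_kv _ ->]] := foldr_push_cancel (red v) w_red; apply: prefix_catl.
have le_ck : size c <= size w - k by have := size_red v; lia.
by rewrite -c_w -(take_takel w le_ck) prefix_take.
Qed.

Lemma reduced_conj_word y s t : reduced (y :: s) -> t.1 != (last y s).1 ->
  reduced ((y :: s) ++ t :: winv (y :: s)).
Proof.
move=> ys_red t_last; have := winv_reduced ys_red; move: ys_red.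
have -> : winv (y :: s) = linv (last y s) :: winv (belast y s).
  by rewrite lastI /winv map_rcons rev_rcons.
rewrite /reduced /= cat_path => -> /= ->.
have neq_fst (a b : letter n) : a.1 != b.1 -> a != b by apply: contraNneq => ->.
by rewrite !neq_fst // eq_sym.
Qed.

End FreeReduction.

Section FreeGroupLaws.
Variable n : nat.
Implicit Types a b c : FG n.

Lemma fg_mulA : associative (@fg_mul n).
Proof. by move=> a b c; apply: val_inj; rewrite /= red_redr red_redl catA. Qed.

Lemma fg_mul1g : left_id (fg_one n) (@fg_mul n).
Proof. by move=> a; apply: val_inj; rewrite /= red_id ?(valP a). Qed.

Lemma fg_mulg1 : right_id (fg_one n) (@fg_mul n).
Proof. by move=> a; apply: val_inj; rewrite /= cats0 red_id ?(valP a). Qed.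

Lemma fg_mulVg : left_inverse (fg_one n) (@fg_inv n) (@fg_mul n).
Proof. by move=> a; apply: val_inj; rewrite /= red_redl red_winv_cat. Qed.

Lemma fg_mulgV : right_inverse (fg_one n) (@fg_inv n) (@fg_mul n).
Proof.
by move=> a; apply: val_inj; rewrite /= red_redr -{1}(winvK (val a)) red_winv_cat.
Qed.

End FreeGroupLaws.

HB.instance Definition _ (n : nat) := Choice.on (FG n).
HB.instance Definition _ (n : nat) :=
  isGroup.Build (FG n) (@fg_mulA n) (@fg_mul1g n) (@fg_mulg1 n) (@fg_mulVg n) (@fg_mulgV n).

Local Open Scope group_scope.

Section ReducedWords.
Variable n : nat.
Implicit Types (c g h t w : FG n) (x : letter n).

Definition wlen g := size (val g).

Lemma wlenV g : wlen g^-1 = wlen g.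
Proof.
have le_inv h : wlen h^-1 <= wlen h.
  by apply: leq_trans (size_red _) _; rewrite size_rev size_map.
by apply/eqP; rewrite eqn_leq le_inv -{1}(invgK g) le_inv.
Qed.

Lemma wlenM g h : wlen (g * h) <= wlen g + wlen h.
Proof. by apply: leq_trans (size_red _) _; rewrite size_cat. Qed.

Lemma neq1_val_cons g : g != 1 -> exists y s, val g = y :: s.
Proof.
case E: (val g) => [|y s]; last by exists y, s.
by have -> : g = 1 by apply: val_inj.
Qed.

Definition fg_letter x : FG n := exist _ [:: x] isT.

Lemma fg_letterV x : (fg_letter x)^-1 = fg_letter (linv x).
Proof. exact: val_inj. Qed.

Lemma fg_letter_neq1 x : fg_letter x != 1.
Proof. by apply/eqP => /(congr1 val). Qed.

Lemma val_conj_letter c y s x : val c = y :: s -> x.1 != (last y s).1 ->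
  val (c * fg_letter x * c^-1) = val c ++ x :: winv (val c).
Proof.
move=> cE x_last; rewrite /= red_redl red_redr -catA cE red_id //.
by apply: reduced_conj_word; rewrite // -cE (valP c).
Qed.

Lemma prefix_mulr c g t : prefix (val c) (val g) -> wlen c + wlen t <= wlen g ->
  prefix (val c) (val (g * t)).
Proof. exact/prefix_red_cat/valP. Qed.

Lemma prefix_exit c g t : prefix (val c) (val g) -> ~~ prefix (val c) (val (g * t)) ->
  exists2 w, g = c * w & wlen w < wlen t.
Proof.
move=> /[dup] cg /prefixP[s gE] cgt.
have s_red : reduced s by move: (valP g); rewrite gE => /cat_sorted2[].
exists (exist _ s s_red); first by apply: val_inj; rewrite /= -gE red_id ?(valP g).
have : ~~ (wlen c + wlen t <= wlen g) by apply: contra cgt; apply: prefix_mulr.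
by rewrite /wlen gE size_cat /=; lia.
Qed.

End ReducedWords.

Fixpoint words n m : seq (seq (letter n)) :=
  if m is m'.+1 then [::] :: [seq x :: w | x <- enum {: letter n}, w <- words n m']
  else [:: [::]].

Lemma mem_words n m (w : seq (letter n)) : size w <= m -> w \in words n m.
Proof.
elim: m w => [|m IHm] [|x w] //= le_wm; rewrite inE; apply/orP; right.
by apply: (allpairs_f (fun x w => x :: w)); rewrite ?mem_enum ?IHm.
Qed.

Definition ball n m : seq (FG n) := pmap insub (words n m).

Lemma mem_ball n m (g : FG n) : wlen g <= m -> g \in ball n m.
Proof. by rewrite mem_pmap_sub; apply: mem_words. Qed.

Section GeneratingSet.
Variables (n : nat) (X : seq (FG n)).

Definition gen_len := \max_(x <- X) wlen x.

Lemma wlen_symm x : in_symm X x -> wlen x <= gen_len.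
Proof. by case=> Xx; [|rewrite -wlenV]; apply: leq_bigmax_seq. Qed.

Lemma wlen_prod s : (forall x, x \in s -> in_symm X x) ->
  wlen (fg_prod s) <= (size s * gen_len)%N.
Proof.
elim: s => [|x s IHs] //= Xs; rewrite mulSn; apply: leq_trans (wlenM _ _) _.
apply: leq_add; first by apply/wlen_symm/Xs; rewrite mem_head.
by apply: IHs => y sy; apply: Xs; rewrite inE sy orbT.
Qed.

Lemma dist_le_mulr r g h : dist_le X r g h ->
  exists2 t, wlen t <= (r * gen_len)%N & h = g * t.
Proof.
case=> s [le_sr [Xs <-]]; exists (fg_prod s) => //.
by apply: leq_trans (wlen_prod Xs) _; rewrite leq_mul2r le_sr orbT.
Qed.

End GeneratingSet.

Section PositiveCone.
Variables (G : groupType) (P : G -> Prop).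
Hypothesis P_mul : forall g h, P g -> P h -> P (g * h).
Hypothesis P_total : forall g, P g \/ P g^-1 \/ g = 1.
Hypothesis P_asym : forall g, P g -> ~ P g^-1.

(* [E] is a strict upper bound of [L] for the left-invariant total order
   [u < v <-> P (u^-1 * v)]: a maximum of [L] multiplied by [p]. *)
Lemma cone_strict_upper_bound p (L : seq G) : P p ->
  exists E, forall u, u \in L -> P (u^-1 * E).
Proof.
move=> Pp; elim: L => [|v L [E HE]]; first by exists 1.
case: (P_total (v^-1 * E)) => [PvE | PEv_or_eq].
  by exists E => u; rewrite inE => /predU1P[-> | /HE].
exists (v * p) => u; rewrite inE => /predU1P[-> | Lu]; first by rewrite mulKg.
rewrite mulgA; apply: P_mul Pp; case: PEv_or_eq => [PEv | /mulg1_eq].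
  by rewrite -[v](mulVKg E) mulgA; apply: P_mul (HE u Lu) _; rewrite invgM invgK in PEv.
by rewrite invgK => ->; apply: HE.
Qed.

Lemma exists_translate_outside_cone p (L : seq G) : P p ->
  exists c, forall w, w \in L -> ~ P (c * w).
Proof.
move=> /(cone_strict_upper_bound L)[E HE]; exists E^-1 => w /HE PwE PEw.
by apply: (P_asym PEw); rewrite invgM invgK.
Qed.

End PositiveCone.

Lemma exists_exit_index (T : Type) (Q : pred T) (f : nat -> T) k :
  Q (f 0) -> ~~ Q (f k) -> exists2 i, i < k & Q (f i) && ~~ Q (f i.+1).
Proof.
move=> Q0; elim: k => [|k IHk] Qk; first by rewrite Q0 in Qk.
case: (boolP (Q (f k))) => [Qk' | /IHk[i lt_ik Qi]]; first by exists k; rewrite ?Qk'.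
by exists i; first exact: ltnW.
Qed.

Lemma exists_neq_ord n (i : 'I_n) : 1 < n -> exists j : 'I_n, j != i.
Proof.
move=> n_gt1; case: (eqVneq i (Ordinal n_gt1)) => [->|ne].
  by exists (Ordinal (ltnW n_gt1)); apply/eqP => /(congr1 val).
by exists (Ordinal n_gt1); rewrite eq_sym.
Qed.

Section FreeGroupCone.
Variables (n : nat) (P : FG n -> Prop).
Hypothesis n_gt1 : 1 < n.
Hypothesis P_total : forall g, P g \/ P g^-1 \/ g = 1.
Implicit Type c : FG n.

Lemma exists_positive_letter (j : 'I_n) : exists2 y : letter n, y.1 = j & P (fg_letter y).
Proof.
case: (P_total (fg_letter (j, true))) => [|[|/eqP]]; first by exists (j, true).
  by rewrite fg_letterV; exists (j, false).
by rewrite (negbTE (fg_letter_neq1 _)).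
Qed.

Lemma positive_with_prefix c : c != 1 -> exists2 a, P a & prefix (val c) (val a).
Proof.
move=> /neq1_val_cons[y [s cE]]; have [j j_last] := exists_neq_ord (last y s).1 n_gt1.
have conj_prefix z : z.1 = j -> prefix (val c) (val (c * fg_letter z * c^-1)).
  by move=> zj; rewrite (val_conj_letter cE) ?zj // prefix_prefix.
case: (P_total (c * fg_letter (j, true) * c^-1)) => [Pa | [Pa | /(congr1 val)]].
- by exists (c * fg_letter (j, true) * c^-1); last exact: conj_prefix.
- exists (c * fg_letter (j, false) * c^-1); last exact: conj_prefix.
  by move: Pa; rewrite !invgM invgK mulgA fg_letterV.
- by rewrite (val_conj_letter cE) // cE.
Qed.

Lemma positive_without_prefix c : c != 1 -> exists2 b, P b & ~~ prefix (val c) (val b).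
Proof.
move=> /neq1_val_cons[y [s cE]]; have [j j_y] := exists_neq_ord y.1 n_gt1.
have [z zj Pz] := exists_positive_letter j; exists (fg_letter z) => //.
rewrite cE /=; apply/nandP; left; apply: contraNneq j_y => ->; by rewrite zj.
Qed.

End FreeGroupCone.

Theorem corollary1p2 (n : nat) (Hn : 2 <= n) (X : seq (FG n)) (HX : generates X)
  (P : FG n -> Prop) (HP : positive_cone P) :
  ~ coarsely_connected X P.
Proof.
case: HP => P_mul P_trichotomy [r [_ P_conn]].
have P_total g : P g \/ P g^-1 \/ g = 1 := proj1 (P_trichotomy g).
have P_asym g : P g -> ~ P g^-1.
  by move=> Pg Pg'; case: (P_trichotomy g) => _ [/(_ (conj Pg Pg'))].
(* Every r-step is a right multiplication by an element of length at most [K]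
   (lemma [dist_le_mulr]); this is all that is used of [X]. *)
pose K := (r * gen_len X)%N.
have [y _ Py] := exists_positive_letter P_total (Ordinal Hn).
(* The radius [K.+1] makes the ball contain a letter even if [K = 0]. *)
have [c c_out] :=
  exists_translate_outside_cone P_mul P_total P_asym (ball n K.+1) Py.
have c_neq1 : c != 1.
  by apply/eqP => c1; apply: (c_out (fg_letter y)); rewrite ?mem_ball ?c1 ?mul1g.
have [a Pa ca] := positive_with_prefix Hn P_total c_neq1.
have [b Pb cb] := positive_without_prefix Hn P_total c_neq1.
have [k [f [f0 [fk [Pf f_steps]]]]] := P_conn a b Pa Pb.
rewrite -f0 in ca; rewrite -fk in cb.
have [i lt_ik /andP[cfi cfi1]] :=
  exists_exit_index (Q := fun g => prefix (val c) (val g)) ca cb.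
have [t tK fi1] := dist_le_mulr (f_steps i lt_ik).
rewrite fi1 in cfi1; have [w fiE wt] := prefix_exit cfi cfi1.
apply: (c_out w); first by apply: mem_ball; lia.
by rewrite -fiE; apply/Pf/ltnW.
Qed.
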